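(* Let $M$ be a Mealy machine, $A$ an NFA over $I_M$, $\sqsubseteq$ a reflexive relation on $S_A$ such that $a\sqsubseteq b$ implies $\mathcal{L}_A(a)\subseteq\mathcal{L}_A(b)$, $E\subseteq\mathcal{L}_A$ a finite prefix-closed set, and $k\in\mathbb{N}$. Suppose that every word $\alpha\in\mathcal{L}_A\setminus E$ has a prefix $\beta\in E$ which is $(k+1)$-saturated. Then $E$ is $k$-complete in the context of $\mathcal{L}_A$: for every Mealy machine $N$ with the same input/output alphabets as $M$ and at most $k$ states, $M\sim_E N$ implies $M\sim_{\mathcal{L}_A}N$.
   Context: Mealy machines $M=(I_M,O_M,S_M,\delta_M,\lambda_M,r_M)$ have $\delta_M,\lambda_M$ extended to words as usual, with $\delta_M(\alpha)=\delta_M(r_M,\alpha)$, $\lambda_M(\alpha)=\lambda_M(r_M,\alpha)$. NFAs $A=(I_M,S_A,\Delta_A,r_A)$ have all states accepting; $\Delta_A(a,\alpha)$ is the set of states reachable from $a$ by a run on $\alpha$, $\Delta_A(\alpha)=\Delta_A(r_A,\alpha)$, $\mathcal{L}_A(a)=\{\alpha:\Delta_A(a,\alpha)\ne\emptyset\}$, $\mathcal{L}_A=\mathcal{L}_A(r_A)$. For a set $V$ of words, $M\sim_V N$ means $\lambda_M(\alpha)=\lambda_N(\alpha)$ for all $\alpha\in V$. Locations $(s,a),(t,b)\in S_M\times S_A$ are incompatible, $(s,a)\nsim(t,b)$, if some $\alpha\in\mathcal{L}_A(a)\cap\mathcal{L}_A(b)$ has $\lambda_M(s,\alpha)\ne\lambda_M(t,\alpha)$.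 Words $\alpha,\beta\in E$ are $E$-separable, $\alpha\,\#_E\,\beta$, if some $\gamma$ has $\alpha\gamma,\beta\gamma\in E$ and $\lambda_M(\delta_M(\alpha),\gamma)\ne\lambda_M(\delta_M(\beta),\gamma)$. The context tree $\Gamma$ is the set of nodes $a/\alpha$ (pairs) with $\alpha\in\mathcal{L}_A$ and $a\in\Delta_A(\alpha)$; for $D\subseteq\mathcal{L}_A$, $\Gamma(D)$ is the set of nodes $a/\alpha$ with $\alpha\in D$. A node $b/\beta$ precedes $a/\alpha$, written $b/\beta\preceq a/\alpha$, if $\alpha=\beta\gamma$ for some $\gamma$ with $a\in\Delta_A(b,\gamma)$. A ranking is a sequence of nodes $(a_j/\alpha_j)_{j=1}^m$ with $\alpha_1<\dots<\alpha_m$ (strict prefixes); it is monotonous if $a_1\sqsupseteq a_2\sqsupseteq\dots\sqsupseteq a_m$. $E$ is incompatibility-preserving w.r.t. a set of nodes $R\subseteq\Gamma(E)$ if for all $a/\alpha,b/\beta\in R$ with $(\delta_M(\alpha),a)\nsim(\delta_M(\beta),b)$ we have $\alpha\,\#_E\,\beta$. A node $a/\alpha$ is $k$-saturated if there is a monotonous ranking $R\subseteq\Gamma(E)$ with $|R|=k$, $b/\beta\preceq a/\alpha$ for all $b/\beta\in R$, and $E$ incompatibility-preserving w.r.t. $R$. A word $\alpha\in\mathcal{L}_A$ is $k$-saturated if every node $a/\alpha$ with $a\in\Delta_A(\alpha)$ is $k$-saturated. *)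

From mathcomp Require Import all_boot all_order.
Set Implicit Arguments.
Unset Strict Implicit.
Unset Printing Implicit Defensive.

Record mealy (I O : finType) := Mealy {
  mstate : finType;
  mdelta : mstate -> I -> mstate;
  mlambda : mstate -> I -> O;
  minit : mstate }.
Arguments mdelta {I O} m : rename.
Arguments mlambda {I O} m : rename.
Arguments minit {I O} m : rename.

Section Mealy.
Variables (I O : finType) (M : mealy I O).

Fixpoint mdeltaw (s : mstate M) (w : seq I) : mstate M :=
  match w with [::] => s | x :: w' => mdeltaw (mdelta M s x) w' end.

Fixpoint mlambdaw (s : mstate M) (w : seq I) : seq O :=
  match w with
  | [::] => [::]
  | x :: w' => mlambda M s x :: mlambdaw (mdelta M s x) w'
  end.

Definition mdelta0 (w : seq I) := mdeltaw (minit M) w.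
Definition mlambda0 (w : seq I) := mlambdaw (minit M) w.
End Mealy.
Arguments mdeltaw {I O} M.
Arguments mlambdaw {I O} M.
Arguments mdelta0 {I O} M.
Arguments mlambda0 {I O} M.

Definition mequiv_on (I O : finType) (M N : mealy I O) (V : seq I -> Prop) :=
  forall w, V w -> mlambda0 M w = mlambda0 N w.

(** NFAs with all states accepting. *)
Record nfa (I : finType) := NFA {
  astate : finType;
  atrans : astate -> I -> astate -> bool;
  ainit : astate }.
Arguments atrans {I} n : rename.
Arguments ainit {I} n : rename.

Section NFA.
Variables (I : finType) (A : nfa I).

Fixpoint reach (a : astate A) (w : seq I) (b : astate A) : Prop :=
  match w with
  | [::] => a = b
  | x :: w' => exists c, atrans A a x c /\ reach c w' b
  end.

Definition lang (a : astate A) (w : seq I) : Prop := exists b, reach a w b.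
Definition Lang (w : seq I) : Prop := lang (ainit A) w.
End NFA.
Arguments reach {I} A.
Arguments lang {I} A.
Arguments Lang {I} A.

Section Saturation.
Variables (I O : finType) (M : mealy I O) (A : nfa I).
Variable sq : rel (astate A).
Variable E : seq (seq I).

Definition incompatible (s : mstate M) (a : astate A) (t : mstate M) (b : astate A) :=
  exists w, lang A a w /\ lang A b w /\ mlambdaw M s w <> mlambdaw M t w.

Definition Esep (al be : seq I) :=
  al \in E /\ be \in E /\
  exists g, (al ++ g) \in E /\ (be ++ g) \in E /\
    mlambdaw M (mdelta0 M al) g <> mlambdaw M (mdelta0 M be) g.

(** nodes are pairs (a, alpha) standing for a/alpha *)
Definition node := (astate A * seq I)%type.

Definition in_Gamma (D : seq I -> Prop) (n : node) :=
  D n.2 /\ Lang A n.2 /\ reach A (ainit A) n.2 n.1.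

Definition precedes (nb na : node) :=
  exists g, na.2 = nb.2 ++ g /\ reach A nb.1 g na.1.

Definition strict_prefix (u v : seq I) := prefix u v && (u != v).

Definition ranking (R : seq node) := sorted (fun x y => strict_prefix x.2 y.2) R.

Definition monotonous (R : seq node) := sorted (fun x y => sq y.1 x.1) R.

Definition incompat_preserving (R : seq node) :=
  forall na nb, na \in R -> nb \in R ->
    incompatible (mdelta0 M na.2) na.1 (mdelta0 M nb.2) nb.1 ->
    Esep na.2 nb.2.

Definition node_saturated (k : nat) (n : node) :=
  exists R : seq node,
    [/\ ranking R /\ monotonous R,
        (forall x, x \in R -> in_Gamma (fun w => w \in E) x),
        size R = k,
        (forall x, x \in R -> precedes x n)
      & incompat_preserving R].

Definition word_saturated (k : nat) (al : seq I) :=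
  Lang A al /\ forall a, reach A (ainit A) al a -> node_saturated k (a, al).
End Saturation.

(** Induction on the length of [al] in [L_A].  A word of [E] is handled by
    [M ~_E N]; otherwise [al = be ++ rho] with [be] a (k+1)-saturated word of
    [E].  Since [N] has at most [k] states, two nodes [ai/ui] and [aj/uj]
    ([ui] a strict prefix of [uj]) of the saturating ranking lead [N] to the same
    state.  Write [al = uj ++ g].  Monotonicity gives [g] in [L_A(ai)], so
    [(delta_M(ui), ai)] and [(delta_M(uj), aj)] cannot be incompatible: that
    would make [ui] and [uj] [E]-separable, which no machine [E]-equivalent to
    [M] can do while merging them.  Hence [M] answers [g] alike from both, and
    [al] is reduced to the shorter word [ui ++ g]. *)
From mathcomp Require Import all_boot all_order.
Set Implicit Arguments.
Unset Strict Implicit.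
Unset Printing Implicit Defensive.

Lemma cat_injr (T : Type) (s : seq T) : injective (cat s).
Proof. by elim: s => //= x s IH u v [/IH]. Qed.

(* Unlike [sorted_ltn_nth], [P] need not be a transitive boolean relation: it is
   used below for inclusion of NFA languages, while [sq] itself is not transitive. *)
Lemma sorted_nth_rel (T : Type) (r : rel T) (P : T -> T -> Prop) x0 s i j :
  (forall x y z, P x y -> P y z -> P x z) -> (forall x y, r x y -> P x y) ->
  sorted r s -> i < j < size s -> P (nth x0 s i) (nth x0 s j).
Proof.
move=> P_trans rP; elim: s i j => [|a s IH] i j //= path_as /andP[lt_ij lt_js].
  by rewrite ltn0 in lt_js.
have sorted_s : sorted r s := path_sorted path_as.
case: i j lt_ij lt_js => [|i] [|j] //= lt_ij lt_js; last first.
  by apply: IH => //; apply/andP.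
have ra0 : r a (nth x0 s 0).
  by move: path_as lt_js; clear IH sorted_s; case: s => //= b s /andP[].
case: j lt_ij lt_js => [|j] _ lt_js; first exact: rP.
by apply: P_trans (rP _ _ ra0) _; apply: IH.
Qed.

Lemma pigeonhole_nat (T : finType) (f : nat -> T) n : #|T| < n ->
  exists i j, [/\ i < j, j < n & f i = f j].
Proof.
move=> lt_Tn; pose g (i : 'I_n) := f i.
have /injectivePn[i [j neq_ij eq_fij]] : ~~ injectiveb g.
  by apply/injectiveP => /leq_card; rewrite card_ord leqNgt lt_Tn.
case: (ltngtP i j) => [lt_ij | lt_ji | /val_inj eq_ij].
- by exists i, j; rewrite lt_ij ltn_ord.
- by exists j, i; rewrite lt_ji ltn_ord.
- by rewrite eq_ij eqxx in neq_ij.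
Qed.

Lemma reach_cat (I : finType) (A : nfa I) a u v b :
  reach A a (u ++ v) b <-> exists c, reach A a u c /\ reach A c v b.
Proof.
elim: u a => [|x u IH] a /=; first by split=> [|[c [-> //]]]; exists a.
split=> [[c [ac /IH[d [cd db]]]] | [d [[c [ac cd]] db]]].
  by exists d; split=> //; exists c.
by exists c; split=> //; apply/IH; exists d.
Qed.

Section MealyWords.
Variables (I O : finType) (M : mealy I O).

Lemma mlambdaw_cat s u v :
  mlambdaw M s (u ++ v) = mlambdaw M s u ++ mlambdaw M (mdeltaw M s u) v.
Proof. by elim: u s => //= x u IH s; rewrite IH. Qed.

Lemma mlambda0_cat u v :
  mlambda0 M (u ++ v) = mlambda0 M u ++ mlambdaw M (mdelta0 M u) v.
Proof. exact: mlambdaw_cat. Qed.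

End MealyWords.

Section TwoMachines.
Variables (I O : finType) (M N : mealy I O).

Lemma mequiv_on_residual (V : seq I -> Prop) u g :
  mequiv_on M N V -> V u -> V (u ++ g) ->
  mlambdaw M (mdelta0 M u) g = mlambdaw N (mdelta0 N u) g.
Proof.
by move=> MN Vu /MN; rewrite !mlambda0_cat (MN _ Vu) => /cat_injr.
Qed.

Lemma mlambda0_transfer u v g :
  mlambda0 M u = mlambda0 N u -> mlambda0 M v = mlambda0 N v ->
  mdelta0 N u = mdelta0 N v ->
  mlambdaw M (mdelta0 M u) g = mlambdaw M (mdelta0 M v) g ->
  mlambda0 M (u ++ g) = mlambda0 N (u ++ g) ->
  mlambda0 M (v ++ g) = mlambda0 N (v ++ g).
Proof.
move=> eq_u eq_v eqN_uv eqM_g; rewrite !mlambda0_cat eq_u eq_v eqN_uv -eqM_g.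
by move/cat_injr=> ->.
Qed.

End TwoMachines.

Section Saturation.
Variables (I O : finType) (M : mealy I O) (A : nfa I).
Variables (sq : rel (astate A)) (E : seq (seq I)).
Hypothesis sq_lang : forall a b, sq a b -> forall w, lang A a w -> lang A b w.

Lemma ranking_nth_size_lt x0 (R : seq (node A)) i j :
  ranking R -> i < j < size R -> size (nth x0 R i).2 < size (nth x0 R j).2.
Proof.
move=> rankR.
apply: (sorted_nth_rel (P := fun x y : node A => size x.2 < size y.2) x0 _ _ rankR).
  by move=> x y z; apply: ltn_trans.
move=> x y /andP[/prefixP[s ->] neq_xy]; rewrite size_cat -[X in X < _]addn0.
by rewrite ltn_add2l lt0n size_eq0; apply: contraNneq neq_xy => ->; rewrite cats0.
Qed.

Lemma monotonous_nth_lang x0 (R : seq (node A)) i j w :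
  monotonous sq R -> i < j < size R -> lang A (nth x0 R j).1 w -> lang A (nth x0 R i).1 w.
Proof.
move=> monR ltij; move: w.
apply: (sorted_nth_rel (P := fun x y : node A => forall w, lang A y.1 w -> lang A x.1 w)
  x0 _ _ monR ltij).
  by move=> x y z xy yz w /yz /xy.
by move=> x y /sq_lang.
Qed.

Variable N : mealy I O.
Hypothesis ME : mequiv_on M N (fun w => w \in E).

Lemma Esep_mdelta0_neq u v : Esep M E u v -> mdelta0 N u <> mdelta0 N v.
Proof.
move=> [uE [vE [g [ugE [vgE neq_g]]]]] eq_uv; apply: neq_g.
by rewrite (mequiv_on_residual ME uE ugE) (mequiv_on_residual ME vE vgE) eq_uv.
Qed.

Lemma mdelta0_eq_compatible (R : seq (node A)) na nb g :
  incompat_preserving M E R -> na \in R -> nb \in R ->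
  mdelta0 N na.2 = mdelta0 N nb.2 -> lang A na.1 g -> lang A nb.1 g ->
  mlambdaw M (mdelta0 M na.2) g = mlambdaw M (mdelta0 M nb.2) g.
Proof.
move=> ipR naR nbR eqN ga gb.
case: (eqVneq (mlambdaw M (mdelta0 M na.2) g) (mlambdaw M (mdelta0 M nb.2) g))
  => // /eqP neq_g.
by case: (Esep_mdelta0_neq (ipR _ _ naR nbR (ex_intro _ g (conj ga (conj gb neq_g))))).
Qed.

Variable k : nat.
Hypothesis card_N : #|mstate N| <= k.

Lemma saturated_prefix_step be rho :
  word_saturated M sq E k.+1 be -> Lang A (be ++ rho) ->
  (forall w, size w < size (be ++ rho) -> Lang A w -> mlambda0 M w = mlambda0 N w) ->
  mlambda0 M (be ++ rho) = mlambda0 N (be ++ rho).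
Proof.
move=> [_ sat_be] [b /reach_cat[a [reach_be reach_rho]]] IH.
have [R [[rankR monR] GammaR sizeR precR ipR]] := sat_be a reach_be.
pose x0 : node A := (a, be).
have [i [j [lt_ij lt_jk eqN]]] :=
  pigeonhole_nat (fun i => mdelta0 N (nth x0 R i).2) (leq_ltn_trans card_N (ltnSn k)).
rewrite -sizeR in lt_jk; have lt_ijR : i < j < size R by rewrite lt_ij.
set ni := nth x0 R i in eqN *; set nj := nth x0 R j in eqN *.
have niR : ni \in R by rewrite mem_nth // (ltn_trans lt_ij).
have njR : nj \in R by rewrite mem_nth.
have [niE [_ reach_ni]] := GammaR _ niR; have [njE _] := GammaR _ njR.
have [gj [/= be_j reach_gj]] := precR _ njR.
have al_j : be ++ rho = nj.2 ++ (gj ++ rho) by rewrite be_j catA.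
have lang_j : lang A nj.1 (gj ++ rho) by exists b; apply/reach_cat; exists a.
have lang_i : lang A ni.1 (gj ++ rho) := monotonous_nth_lang monR lt_ijR lang_j.
rewrite al_j; apply: (mlambda0_transfer (ME niE) (ME njE) eqN).
  exact: mdelta0_eq_compatible ipR niR njR eqN lang_i lang_j.
apply: IH.
  by rewrite al_j !size_cat ltn_add2r (ranking_nth_size_lt _ rankR lt_ijR).
have [c reach_c] := lang_i; by exists c; apply/reach_cat; exists ni.1.
Qed.

End Saturation.

Theorem theorem2 (I O : finType) (M : mealy I O) (A : nfa I)
  (sq : rel (astate A))
  (sq_refl : reflexive sq)
  (sq_lang : forall a b, sq a b -> forall w, lang A a w -> lang A b w)
  (E : seq (seq I))
  (E_lang : forall w, w \in E -> Lang A w)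
  (E_prefix_closed : forall u v, (u ++ v) \in E -> u \in E)
  (k : nat)
  (Hsat : forall al, Lang A al -> al \notin E ->
     exists2 be, prefix be al & be \in E /\ word_saturated M sq E k.+1 be) :
  forall N : mealy I O, #|mstate N| <= k ->
    mequiv_on M N (fun w => w \in E) -> mequiv_on M N (Lang A).
Proof.
move=> N card_N ME al; have [n] := ubnP (size al).
elim: n al => // n IH al /ltnSE le_al L_al.
have [alE | alNE] := boolP (al \in E); first exact: ME.
have [be /prefixP[rho eq_al] [_ sat_be]] := Hsat al L_al alNE; subst al.
apply: (saturated_prefix_step sq_lang ME card_N sat_be L_al) => w lt_w.
by apply: IH; apply: leq_trans le_al.
Qed.
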